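(* Every (fork, co-dart)-free graph $G$ satisfies $\chi(G)\le\binom{\omega(G)+1}{2}$.
   Context: All graphs are finite and simple; $\chi$ is chromatic number, $\omega$ clique number. The fork is obtained from $K_{1,3}$ by subdividing one edge once. The co-dart is the disjoint union of a paw (a triangle with a pendant vertex) and an isolated vertex. $G$ is $(H_1,H_2)$-free if it has no induced subgraph isomorphic to $H_1$ or $H_2$. *)

From mathcomp Require Import all_boot.
Set Implicit Arguments. Unset Strict Implicit. Unset Printing Implicit Defensive.

Definition simple_graph (T : finType) (e : rel T) : Prop :=
  irreflexive e /\ symmetric e.

Definition induces (U T : finType) (h : rel U) (e : rel T) : Prop :=
  exists f : U -> T, injective f /\ forall x y, e (f x) (f y) = h x y.

Definition free_of (U T : finType) (h : rel U) (e : rel T) : Prop :=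
  ~ induces h e.

(* Fork: K_{1,3} (center 0, leaves 1,2,4) with edge 0-4 subdivided by vertex 3:
   edges 0-1, 0-2, 0-3, 3-4. *)
Definition fork_edges : seq (nat * nat) := [:: (0,1); (0,2); (0,3); (3,4)].
(* Co-dart: paw (triangle 0,1,2 with pendant 3 attached to 0) + isolated 4. *)
Definition codart_edges : seq (nat * nat) := [:: (0,1); (1,2); (0,2); (0,3)].

Definition rel_of_edges (E : seq (nat * nat)) : rel 'I_5 :=
  fun x y => ((nat_of_ord x, nat_of_ord y) \in E) || ((nat_of_ord y, nat_of_ord x) \in E).

Definition fork : rel 'I_5 := rel_of_edges fork_edges.
Definition codart : rel 'I_5 := rel_of_edges codart_edges.

Definition clique (T : finType) (e : rel T) (A : {set T}) : bool :=
  [forall x in A, forall y in A, (x != y) ==> e x y].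

Definition clique_number (T : finType) (e : rel T) : nat :=
  \max_(A : {set T} | clique e A) #|A|.

Definition colourable (T : finType) (e : rel T) (k : nat) : bool :=
  [exists c : {ffun T -> 'I_k}, [forall x, forall y, e x y ==> (c x != c y)]].

Lemma colourable_card (T : finType) (e : rel T) :
  irreflexive e -> exists k, colourable e k.
Proof.
move=> irr; exists #|T|; apply/existsP; exists (finfun (@enum_rank T)).
apply/forallP => x; apply/forallP => y; apply/implyP => exy.
rewrite !ffunE; apply/negP => /eqP /enum_rank_inj xy; subst y; by rewrite irr in exy.
Qed.

Definition chromatic_number (T : finType) (e : rel T) (irr : irreflexive e) : nat :=
  ex_minn (colourable_card irr).

From mathcomp Require Import all_boot.
Set Implicit Arguments. Unset Strict Implicit. Unset Printing Implicit Defensive.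

(* We colour a vertex set A of clique number at most w with binom(w+1, 2)
   colours, by induction on w.  For w <= 2, A is stable (1 colour) or
   triangle-free; triangle-free fork-free graphs are 3-colourable: a vertex a of
   degree <= 2 is coloured greedily, otherwise the first breadth-first layers
   around a split into two stable sets {a} + L2 and L1 + L3 with no edge to the
   rest of the graph.  For w >= 3 pick a vertex v: its neighbourhood has clique
   number <= w - 1 and takes binom(w, 2) colours by induction; the remaining
   vertices, v included, induce a paw-free graph because v is isolated there and
   G is co-dart-free.  A paw-free graph of clique number w >= 3 is w-colourable:
   the vertices touching a triangle form a union of components which is complete
   multipartite (non-adjacency is transitive), hence w-colourable, and the rest
   is handled by induction.  As binom(w, 2) + w = binom(w+1, 2), we are done. *)

Lemma third_element (U : finType) (S : {set U}) b d :
  2 < #|S| -> exists2 f, f \in S & (f != b) && (f != d).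
Proof.
move=> gt2S; have : 0 < #|S :\: [set b; d]|.
  rewrite cardsD subn_gt0; apply: leq_ltn_trans gt2S.
  apply: leq_trans (subset_leq_card (subsetIr _ _)) _; rewrite cards2; by case: (b != d).
by case/card_gt0P => f; rewrite !inE negb_or => /andP[/andP[fb fd] fS]; exists f; rewrite ?fb.
Qed.

Lemma card_setD_lt (U : finType) (A B : {set U}) x :
  x \in A -> x \in B -> #|A :\: B| < #|A|.
Proof.
move=> xA xB; rewrite (cardsD1 x A) xA add1n ltnS; apply: subset_leq_card.
by apply/subsetP => y; rewrite !inE => /andP[yB ->]; rewrite andbT; apply: contraNneq yB => ->.
Qed.

Lemma free_colour (s : seq nat) k : size s < k -> exists2 i, i < k & i \notin s.
Proof.
move=> lt_s_k; case: (boolP (all (mem s) (iota 0 k))) => [/allP sub | /allPn[i ik iNs]].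
  by move: (uniq_leq_size (iota_uniq 0 k) sub); rewrite size_iota leqNgt lt_s_k.
by exists i; rewrite // mem_iota in ik.
Qed.

Section ForkCodartFree.
Variables (T : finType) (e : rel T).
Hypotheses (irr : irreflexive e) (sym : symmetric e).

Lemma adj_neq u v : e u v -> u != v.
Proof. by apply: contraTneq => ->; rewrite irr. Qed.

Lemma nbr_neq u v w : e u w -> ~~ e v w -> u != v.
Proof. by move=> euw; apply: contraNneq => <-. Qed.

Definition colourable_on (A : {set T}) (k : nat) : Prop :=
  exists c : T -> nat, (forall x, x \in A -> c x < k) /\
    (forall x y, x \in A -> y \in A -> e x y -> c x != c y).

Definition stable (A : {set T}) : Prop :=
  forall x y, x \in A -> y \in A -> ~~ e x y.

Lemma stable_sub (A B : {set T}) : B \subset A -> stable A -> stable B.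
Proof. by move=> /subsetP sBA stA x y /sBA xA /sBA; apply: stA. Qed.

Lemma colourable_set0 k : colourable_on set0 k.
Proof. by exists (fun=> 0); split=> x; rewrite inE. Qed.

Lemma colourable_mon (A : {set T}) k k' : k <= k' -> colourable_on A k -> colourable_on A k'.
Proof. by move=> lekk' [c [ck cp]]; exists c; split=> // x /ck /leq_trans; apply. Qed.

Lemma colourable_stable (A : {set T}) : stable A -> colourable_on A 1.
Proof.
move=> stA; exists (fun=> 0); split=> // x y xA yA.
by rewrite (negbTE (stA x y xA yA)).
Qed.

Lemma colourable_union (A B : {set T}) j k :
  colourable_on B j -> colourable_on (A :\: B) k -> colourable_on A (j + k).
Proof.
move=> [c1 [c1k c1p]] [c2 [c2k c2p]].
exists (fun x => if x \in B then c1 x else j + c2 x); split.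
  move=> x xA; case: ifP => xB; first by rewrite ltn_addr ?c1k.
  by rewrite ltn_add2l c2k // in_setD xB xA.
move=> x y xA yA exy; case: ifP => xB; case: ifP => yB.
- exact: c1p.
- by rewrite neq_ltn ltn_addr ?c1k.
- by rewrite neq_ltn ltn_addr ?c1k ?orbT.
- by rewrite eqn_add2l c2p // in_setD ?xB ?yB.
Qed.

Lemma colourable_split (A B : {set T}) j k :
  (forall x y, x \in B -> y \in A :\: B -> ~~ e x y) ->
  colourable_on B j -> colourable_on (A :\: B) k -> colourable_on A (maxn j k).
Proof.
move=> sepB [c1 [c1k c1p]] [c2 [c2k c2p]].
have cut x y : x \in B -> y \in A -> y \notin B -> e x y = false.
  by move=> xB yA yB; apply/negbTE/sepB; rewrite // in_setD yB.
exists (fun x => if x \in B then c1 x else c2 x); split.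
  move=> x xA; rewrite leq_max; case: ifP => xB; first by rewrite c1k.
  by rewrite c2k ?orbT // in_setD xB xA.
move=> x y xA yA exy; case: ifP => xB; case: ifP => yB.
- exact: c1p.
- by rewrite cut ?yB in exy.
- by rewrite sym cut ?xB in exy.
- by apply: c2p; rewrite // in_setD ?xB ?yB.
Qed.

Lemma colourable_add_vertex (A : {set T}) a k :
  a \in A -> #|[set y in A | e a y]| < k ->
  colourable_on (A :\ a) k -> colourable_on A k.
Proof.
move=> aA deg [c [ck cp]].
have [i ik iNused] : exists2 i, i < k & i \notin [seq c y | y <- enum [set y in A | e a y]].
  by apply: free_colour; rewrite size_map -cardE.
have nbr_colour y : y \in A -> e a y -> c y != i.
  by move=> yA ay; apply: contraNneq iNused => <-; apply: map_f; rewrite mem_enum inE yA ay.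
exists (fun y => if y == a then i else c y); split.
  by move=> y yA; case: eqP => // /eqP ya; apply: ck; rewrite !inE ya.
move=> y z yA zA eyz; have [ya | ya] := eqVneq y a; have [za | za] := eqVneq z a.
- by rewrite ya za irr in eyz.
- by rewrite eq_sym nbr_colour // -ya.
- by rewrite nbr_colour // -za sym.
- by apply: cp; rewrite // !inE ?ya ?za.
Qed.

Lemma colourable_two_stable (S0 S1 : {set T}) :
  stable S0 -> stable S1 -> colourable_on (S0 :|: S1) 2.
Proof.
move=> st0 st1; apply: (colourable_union (colourable_stable st0)).
apply/colourable_stable/(stable_sub _ st1).
by apply/subsetP => x; rewrite in_setD in_setU => /andP[/negbTE-> /=].
Qed.

Definition omega_le (A : {set T}) (w : nat) : Prop :=
  forall B : {set T}, B \subset A -> clique e B -> #|B| <= w.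

Lemma cliqueP (B : {set T}) :
  reflect (forall x y, x \in B -> y \in B -> x != y -> e x y) (clique e B).
Proof.
apply: (iffP forall_inP) => [cB x y xB yB | cB x xB].
  by move/forall_inP/(_ y yB)/implyP: (cB x xB).
by apply/forall_inP => y yB; apply/implyP; apply: cB.
Qed.

Lemma clique_pair x y : e x y -> clique e [set x; y].
Proof.
move=> exy; apply/cliqueP => u v; rewrite !inE.
by case/orP=> /eqP-> /orP[]/eqP->; rewrite ?eqxx // sym.
Qed.

Lemma omega_le_sub (A A' : {set T}) w : A' \subset A -> omega_le A w -> omega_le A' w.
Proof. by move=> sA'A omA B sBA'; apply: omA; apply: subset_trans sA'A. Qed.

Lemma omega_le_nbr (A N : {set T}) u w : omega_le A w.+1 -> N \subset A -> u \in A ->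
  (forall x, x \in N -> e u x) -> omega_le N w.
Proof.
move=> omA sNA uA adj B sBN cB.
have uB : u \notin B by apply/negP => /(subsetP sBN) /adj; rewrite irr.
have := omA (u |: B); rewrite cardsU1 uB add1n ltnS; apply.
  by rewrite subUset sub1set uA (subset_trans sBN sNA).
apply/cliqueP => x y; rewrite !inE.
move=> /orP[/eqP-> | xB] /orP[/eqP-> | yB]; rewrite ?eqxx // => xy.
- exact/adj/(subsetP sBN).
- by rewrite sym; apply/adj/(subsetP sBN).
- by move/cliqueP: cB; apply.
Qed.

Lemma omega_le0 (A : {set T}) : omega_le A 0 -> A = set0.
Proof.
move=> omA; have [// | [x xA]] := set_0Vmem A.
have x1 : clique e [set x] by apply/cliqueP => y z; rewrite !inE => /eqP-> /eqP->; rewrite eqxx.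
by have := omA _ _ x1; rewrite sub1set cards1 => /(_ xA).
Qed.

Lemma omega_le1_stable (A : {set T}) : omega_le A 1 -> stable A.
Proof.
move=> omA x y xA yA; apply/negP => exy.
have := omA _ _ (clique_pair exy).
by rewrite subUset !sub1set xA yA cards2 (adj_neq exy) => /(_ isT).
Qed.

Definition triangle_free (A : {set T}) : Prop :=
  forall x y z, x \in A -> y \in A -> z \in A -> e x y -> e y z -> e x z -> False.

Lemma triangle_free_sub (A B : {set T}) : B \subset A -> triangle_free A -> triangle_free B.
Proof. by move=> /subsetP sBA tfA x y z /sBA xA /sBA yA /sBA; apply: tfA. Qed.

Lemma omega_le2_triangle_free (A : {set T}) : omega_le A 2 -> triangle_free A.
Proof.
move=> omA x y z xA yA zA exy eyz exz.
have cxyz : clique e [set x; y; z].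
  apply/cliqueP => u v; rewrite !inE => /orP[/orP[]|]/eqP-> /orP[/orP[]|]/eqP->;
    by rewrite ?eqxx // => _; rewrite // sym.
have := omA _ _ cxyz; rewrite !subUset !sub1set xA yA zA.
by rewrite -setUA cardsU1 cards2 !inE negb_or (adj_neq exy) (adj_neq eyz) (adj_neq exz) => /(_ isT).
Qed.

Lemma triangle_free_or_triangle (A : {set T}) :
  triangle_free A \/
  exists x y z, [/\ x \in A, y \in A & z \in A] /\ [/\ e x y, e y z & e x z].
Proof.
case: (boolP [exists x in A, exists y in A, exists z in A, e x y && e y z && e x z]).
  case/exists_inP => x xA /exists_inP[y yA /exists_inP[z zA /andP[/andP[exy eyz] exz]]].
  by right; exists x, y, z; split; split.
move=> noTri; left => x y z xA yA zA exy eyz exz; case/negP: noTri.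
apply/exists_inP; exists x => //; apply/exists_inP; exists y => //.
by apply/exists_inP; exists z => //; rewrite exy eyz exz.
Qed.

Definition paw_free (A : {set T}) : Prop :=
  forall p q r s, p \in A -> q \in A -> r \in A -> s \in A ->
    e p q -> e q r -> e p r -> e p s -> e q s || e r s.

Lemma paw_free_sub (A B : {set T}) : B \subset A -> paw_free A -> paw_free B.
Proof. by move=> /subsetP sBA pawA p q r s /sBA pA /sBA qA /sBA rA /sBA; apply: pawA. Qed.

Lemma paw_nbr (A : {set T}) p q r s : paw_free A ->
  p \in A -> q \in A -> r \in A -> s \in A ->
  e p q -> e q r -> e p r -> e s p -> e s q || e s r.
Proof.
move=> pawA pA qA rA sA epq eqr epr esp; rewrite !(sym s).
by apply: (pawA p q r s) => //; rewrite sym.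
Qed.

(* Non-adjacency is transitive: the graph is complete multipartite. *)
Definition cotransitive (A : {set T}) : Prop :=
  forall x y z, x \in A -> y \in A -> z \in A -> ~~ e x y -> ~~ e y z -> ~~ e x z.

Lemma cotransitive_sub (A B : {set T}) : B \subset A -> cotransitive A -> cotransitive B.
Proof. by move=> /subsetP sBA ctA x y z /sBA xA /sBA yA /sBA; apply: ctA. Qed.

Lemma induces_of_list (h : rel 'I_5) (a b c d x : T) :
  uniq [:: a; b; c; d; x] ->
  (forall i j : 'I_5,
     e (nth a [:: a; b; c; d; x] i) (nth a [:: a; b; c; d; x] j) = h i j) ->
  induces h e.
Proof.
move=> uniq_s pattern; exists (fun i : 'I_5 => nth a [:: a; b; c; d; x] i); split=> //.
by move=> i j /eqP; rewrite nth_uniq ?(ltn_ord i) ?(ltn_ord j) // => /eqP/ord_inj.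
Qed.

Hypothesis forkF : free_of fork e.
Hypothesis codartF : free_of codart e.

Lemma no_induced_fork a b c d x :
  e a b -> e a c -> e a d -> ~~ e b c -> ~~ e b d -> ~~ e c d ->
  e d x -> ~~ e a x -> ~~ e b x -> ~~ e c x -> b != c -> False.
Proof.
move=> eab eac ead nbc nbd ncd edx nax nbx ncx bc; apply: forkF.
apply: (@induces_of_list _ a b c d x).
  have ax : a != x by apply: (nbr_neq (w := b)); rewrite // sym.
  have bx : b != x by apply: (nbr_neq (w := a)); rewrite sym.
  have cx : c != x by apply: (nbr_neq (w := a)); rewrite sym.
  have db : d != b by apply: (nbr_neq (w := x)).
  have dc : d != c by apply: (nbr_neq (w := x)).
  rewrite /= !inE !negb_or bc ax bx cx (adj_neq eab) (adj_neq eac) (adj_neq ead).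
  by rewrite (adj_neq edx) !(eq_sym _ d) db dc.
move=> i j; case: i => [[|[|[|[|[|i]]]]] Hi] //; case: j => [[|[|[|[|[|j]]]]] Hj] //;
  rewrite /fork /rel_of_edges /=;
  rewrite ?(sym b a) ?(sym c a) ?(sym d a) ?(sym x a) ?(sym c b) ?(sym d b) ?(sym x b)
          ?(sym d c) ?(sym x c) ?(sym x d) ?irr ?eab ?eac ?ead ?edx
          ?(negbTE nbc) ?(negbTE nbd) ?(negbTE ncd) ?(negbTE nax) ?(negbTE nbx) ?(negbTE ncx) //.
Qed.

Lemma no_induced_codart p q r s v :
  e p q -> e q r -> e p r -> e p s -> ~~ e q s -> ~~ e r s ->
  ~~ e v p -> ~~ e v q -> ~~ e v r -> ~~ e v s -> v \notin [:: p; q; r; s] -> False.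
Proof.
move=> epq eqr epr eps nqs nrs nvp nvq nvr nvs vNs; apply: codartF.
apply: (@induces_of_list _ p q r s v).
  move: vNs; rewrite /= !inE !negb_or => /and4P[vp vq vr vs].
  have qs : q != s by apply: (nbr_neq (w := r)); rewrite // sym.
  have rs : r != s by apply: (nbr_neq (w := q)); rewrite sym.
  rewrite (adj_neq epq) (adj_neq eqr) (adj_neq epr) (adj_neq eps) qs rs.
  by rewrite !(eq_sym _ v) vp vq vr vs.
move=> i j; case: i => [[|[|[|[|[|i]]]]] Hi] //; case: j => [[|[|[|[|[|j]]]]] Hj] //;
  rewrite /codart /rel_of_edges /=;
  rewrite ?(sym q p) ?(sym r p) ?(sym s p) ?(sym v p) ?(sym r q) ?(sym s q) ?(sym v q)
          ?(sym s r) ?(sym v r) ?(sym v s) ?irr ?epq ?eqr ?epr ?eps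
          ?(negbTE nqs) ?(negbTE nrs) ?(sym p v) ?(sym q v) ?(sym r v) ?(sym s v)
          ?(negbTE nvp) ?(negbTE nvq) ?(negbTE nvr) ?(negbTE nvs) //.
Qed.

Lemma isolated_paw_free (M : {set T}) v :
  v \in M -> (forall u, u \in M -> ~~ e v u) -> paw_free M.
Proof.
move=> vM iso p q r s pM qM rM sM epq eqr epr eps.
apply/negPn/negP => /norP[nqs nrs].
apply: (no_induced_codart (v := v) epq eqr epr eps nqs nrs); try exact: iso.
rewrite !inE; apply/negP => /or4P[] /eqP vu.
- by move: epq; rewrite -vu (negbTE (iso q qM)).
- by move: epq; rewrite -vu sym (negbTE (iso p pM)).
- by move: epr; rewrite -vu sym (negbTE (iso p pM)).
- by move: eps; rewrite -vu sym (negbTE (iso p pM)).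
Qed.

(* A complete multipartite graph of clique number <= w is w-colourable: the
   non-neighbours of a vertex u form one stable part, the neighbours of u have
   clique number <= w - 1. *)
Lemma cotransitive_colour w :
  forall S : {set T}, cotransitive S -> omega_le S w -> colourable_on S w.
Proof.
elim: w => [|w IH] S ctS omS; first by rewrite (omega_le0 omS); apply: colourable_set0.
have [-> | [u uS]] := set_0Vmem S; first exact: colourable_set0.
pose U := [set x in S | ~~ e u x].
have stU : stable U.
  by move=> x y; rewrite !inE => /andP[xS nux] /andP[yS nuy]; apply: (ctS x u y); rewrite // sym.
have sub_rest : S :\: U \subset S by apply: subsetDl.
rewrite -add1n; apply: (colourable_union (colourable_stable stU)); apply: IH.
  exact: cotransitive_sub sub_rest ctS.
apply: (omega_le_nbr omS sub_rest uS) => x.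
by rewrite !inE negb_and negbK => /andP[/orP[/negbTE-> | ->]].
Qed.

Section BreadthFirstLayers.
Variables (A : {set T}) (a : T).
Hypotheses (aA : a \in A) (tfA : triangle_free A).

Definition layer1 : {set T} := [set y in A | e a y].
Definition layer2 : {set T} :=
  [set x in A | [&& x != a, x \notin layer1 & [exists b in layer1, e b x]]].
Definition layer3 : {set T} :=
  [set x in A | [&& x != a, x \notin layer1, x \notin layer2 & [exists y in layer2, e y x]]].

Lemma in_layer1 y : (y \in layer1) = (y \in A) && e a y.
Proof. by rewrite inE. Qed.

Lemma in_layer2 x :
  (x \in layer2) = [&& x \in A, x != a, x \notin layer1 & [exists b in layer1, e b x]].
Proof. by rewrite inE. Qed.

Lemma in_layer3 x : (x \in layer3) =
  [&& x \in A, x != a, x \notin layer1, x \notin layer2 & [exists y in layer2, e y x]].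
Proof. by rewrite inE. Qed.

Lemma layer1_stable : stable layer1.
Proof.
move=> b d; rewrite !in_layer1 => /andP[bA ab] /andP[dA ad].
by apply/negP => ebd; apply: (@tfA a b d).
Qed.

Lemma layer2_not_adj x : x \in layer2 -> ~~ e a x.
Proof. by rewrite in_layer2 in_layer1 => /and4P[-> _]. Qed.

Lemma beyond_layer1 u b : u \in A -> u != a -> u \notin layer1 -> u \notin layer2 ->
  b \in layer1 -> ~~ e b u.
Proof.
move=> uA ua uL1 uL2 bL1; apply: contra uL2 => ebu.
by rewrite in_layer2 uA ua uL1; apply/exists_inP; exists b.
Qed.

Lemma layer2_fork x b b' b'' : x \in layer2 -> b \in layer1 -> e b x ->
  b' \in layer1 -> b'' \in layer1 -> b' != b'' -> e x b' || e x b''.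
Proof.
move=> xL2 bL1 ebx b'L1 b''L1 b'b''; apply/negPn/negP => /norP[nxb' nxb''].
move: (b'L1) (b''L1) (bL1); rewrite !in_layer1 => /andP[_ ab'] /andP[_ ab''] /andP[_ ab].
apply: (@no_induced_fork a b' b'' b x); rewrite ?(sym b' x) ?(sym b'' x) //;
  by [apply: layer1_stable | apply: layer2_not_adj].
Qed.

Hypothesis deg3 : 2 < #|layer1|.

Lemma layer2_stable : stable layer2.
Proof.
move=> x y xL2 yL2; apply/negP => exy.
move: (xL2) (yL2); rewrite !in_layer2.
move=> /and4P[xA _ _ /exists_inP[b bL1 ebx]] /and4P[yA _ _ /exists_inP[d dL1 edy]].
have bA : b \in A by move: bL1; rewrite in_layer1 => /andP[].
have dA : d \in A by move: dL1; rewrite in_layer1 => /andP[].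
case eyb: (e y b); first by apply: (@tfA x y b) => //; rewrite sym.
case exd: (e x d); first exact: (@tfA x d y).
have bd : b != d by apply: contraFneq eyb => ->; rewrite sym.
have [f fL1 /andP[fb fd]] := third_element b d deg3.
have fA : f \in A by move: fL1; rewrite in_layer1 => /andP[].
have exf : e x f by have := layer2_fork xL2 bL1 ebx dL1 fL1; rewrite exd eq_sym fd => /(_ isT).
have eyf : e y f by have := layer2_fork yL2 dL1 edy bL1 fL1; rewrite eyb eq_sym fb => /(_ isT).
exact: (@tfA x y f).
Qed.

Lemma layer2_two_nbrs y : y \in layer2 ->
  exists b d, [/\ b \in layer1, d \in layer1, b != d, e y b & e y d].
Proof.
move=> yL2; move: (yL2); rewrite in_layer2 => /and4P[_ _ _ /exists_inP[b bL1 eby]].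
have [d dL1 /andP[db _]] := third_element b b deg3.
have [f fL1 /andP[fb fd]] := third_element b d deg3.
have := layer2_fork yL2 bL1 eby dL1 fL1; rewrite eq_sym fd => /(_ isT) /orP[eyd | eyf].
  by exists b, d; split => //; [rewrite eq_sym | rewrite sym].
by exists b, f; split => //; [rewrite eq_sym | rewrite sym].
Qed.

Lemma layer3_fork z y u : z \in layer3 -> y \in layer2 -> e y z ->
  u \in A -> u != a -> u \notin layer1 -> u \notin layer2 -> e z u -> e y u.
Proof.
move=> zL3 yL2 eyz uA ua uL1 uL2 ezu; move: zL3; rewrite in_layer3 => /and5P[zA za zL1 zL2 _].
have [b [d [bL1 dL1 bd eyb eyd]]] := layer2_two_nbrs yL2.
apply/negPn/negP => nyu; apply: (@no_induced_fork y b d z u) => //;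
  by [apply: layer1_stable | apply: beyond_layer1].
Qed.

Lemma layer3_stable : stable layer3.
Proof.
move=> z z' zL3 z'L3; apply/negP => ezz'.
move: (zL3) (z'L3); rewrite !in_layer3.
move=> /and5P[zA _ _ _ /exists_inP[y yL2 eyz]] /and5P[z'A z'a z'L1 z'L2 _].
have yA : y \in A by move: yL2; rewrite in_layer2 => /andP[].
have eyz' := layer3_fork zL3 yL2 eyz z'A z'a z'L1 z'L2 ezz'.
exact: (@tfA y z z').
Qed.

Definition even_layers : {set T} := a |: layer2.
Definition odd_layers : {set T} := layer1 :|: layer3.

Lemma even_layers_stable : stable even_layers.
Proof.
move=> t u; rewrite !in_setU1 => /orP[/eqP-> | tL2] /orP[/eqP-> | uL2].
- by rewrite irr.
- exact: layer2_not_adj.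
- by rewrite sym; apply: layer2_not_adj.
- exact: layer2_stable.
Qed.

Lemma odd_layers_stable : stable odd_layers.
Proof.
move=> t u; rewrite !in_setU => /orP[tL1 | tL3] /orP[uL1 | uL3].
- exact: layer1_stable.
- by move: uL3; rewrite in_layer3 => /and5P[uA ua uL1 uL2 _]; apply: beyond_layer1.
- by move: tL3; rewrite sym in_layer3 => /and5P[tA ta tL1 tL2 _]; apply: beyond_layer1.
- exact: layer3_stable.
Qed.

Lemma layers_closed t u : t \in even_layers :|: odd_layers ->
  u \in A :\: (even_layers :|: odd_layers) -> ~~ e t u.
Proof.
rewrite /even_layers /odd_layers => tB.
rewrite in_setD !in_setU in_set1 !negb_or => /andP[/andP[/andP[ua uL2] /andP[uL1 uL3]] uA].
apply/negP => etu; move: tB; rewrite !in_setU in_set1 => /orP[/orP[/eqP ta | tL2] | /orP[tL1 | tL3]].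
- by move: uL1; rewrite in_layer1 uA -ta etu.
- by case/negP: uL3; rewrite in_layer3 uA ua uL1 uL2; apply/exists_inP; exists t.
- by case/negP: uL2; rewrite in_layer2 uA ua uL1; apply/exists_inP; exists t.
- move: (tL3); rewrite in_layer3 => /and5P[_ _ _ _ /exists_inP[y yL2 eyt]].
  have eyu := layer3_fork tL3 yL2 eyt uA ua uL1 uL2 etu.
  by case/negP: uL3; rewrite in_layer3 uA ua uL1 uL2; apply/exists_inP; exists y.
Qed.

End BreadthFirstLayers.

Lemma triangle_free_colour (A : {set T}) : triangle_free A -> colourable_on A 3.
Proof.
have [n ltAn] := ubnP #|A|; elim: n A ltAn => // n IH A ltAn tfA.
have [-> | [a aA]] := set_0Vmem A; first exact: colourable_set0.
have IHsub (B : {set T}) : B \subset A -> #|B| < #|A| -> colourable_on B 3.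
  move=> sBA ltBA; apply: IH; first exact: leq_trans ltBA _.
  exact: triangle_free_sub sBA tfA.
have [low | high] := ltnP #|layer1 A a| 3.
  apply: (colourable_add_vertex aA low); apply: IHsub; first exact: subsetDl.
  exact: card_setD_lt aA (set11 a).
pose B := even_layers A a :|: odd_layers A a.
have aB : a \in B by rewrite !inE eqxx.
rewrite -[3]/(maxn 2 3); apply: (colourable_split (B := B)).
- exact: layers_closed.
- exact: colourable_two_stable (even_layers_stable aA tfA high) (odd_layers_stable aA tfA high).
- by apply: IHsub; [apply: subsetDl | apply: card_setD_lt aA aB].
Qed.

Section PawFreeComponent.
Variables (M : {set T}) (x y z : T).
Hypotheses (pawM : paw_free M) (xM : x \in M) (yM : y \in M) (zM : z \in M).
Hypotheses (exy : e x y) (eyz : e y z) (exz : e x z).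

Definition touching : {set T} := [set u in M | [|| e u x, e u y | e u z]].

Lemma in_touching u : (u \in touching) = (u \in M) && [|| e u x, e u y | e u z].
Proof. by rewrite inE. Qed.

Lemma touching_two u : u \in touching -> [&& e u x || e u y, e u x || e u z & e u y || e u z].
Proof.
rewrite in_touching => /andP[uM /or3P[ux | uy | uz]].
- by rewrite ux (paw_nbr pawM xM yM zM uM exy eyz exz ux).
- have eyx : e y x by rewrite sym.
  by rewrite uy orbT (paw_nbr pawM yM xM zM uM eyx exz eyz uy).
- have [ezx ezy] : e z x /\ e z y by rewrite !(sym z).
  by rewrite uz !orbT (paw_nbr pawM zM xM yM uM ezx exy ezy uz).
Qed.

Lemma touchingE t : t \in M -> [/\ (t \in touching) = e t x || e t y,
  (t \in touching) = e t x || e t z & (t \in touching) = e t y || e t z].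
Proof.
move=> tM; have two := touching_two (u := t); rewrite in_touching tM /= in two *.
by split; apply/idP/idP => [/two /and3P[h1 h2 h3] // | /orP[] ->]; rewrite ?orbT.
Qed.

Lemma touching_edge u : u \in touching ->
  exists p q, [/\ p \in M, q \in M, e p q, e u p & e u q] /\
    forall t, t \in M -> (t \in touching) = e t p || e t q.
Proof.
move=> uC; have /and3P[uxy uxz uyz] := touching_two uC.
have [eux | nux] := boolP (e u x); last first.
  move: uxy uxz; rewrite (negbTE nux) /= => euy euz.
  by exists y, z; split=> [// | t /touchingE[]].
have [euy | nuy] := boolP (e u y); first by exists x, y; split=> [// | t /touchingE[]].
move: uyz; rewrite (negbTE nuy) /= => euz.
by exists x, z; split=> [// | t /touchingE[]].
Qed.

Lemma touching_sub : touching \subset M.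
Proof. by apply/subsetP => u; rewrite in_touching => /andP[]. Qed.

Lemma touching_closed u t : u \in touching -> t \in M -> e u t -> t \in touching.
Proof.
move=> uC tM eut; have uM := subsetP touching_sub u uC.
have [p [q [[pM qM epq eup euq] touchE]]] := touching_edge uC.
by rewrite touchE //; apply: (paw_nbr pawM uM pM qM tM eup epq euq); rewrite sym.
Qed.

Lemma touching_cotransitive : cotransitive touching.
Proof.
move=> a b c aC bC cC nab nbc; apply/negP => eac.
have inM := subsetP touching_sub; have [aM bM cM] := And3 (inM a aC) (inM b bC) (inM c cC).
have [p [q [[pM qM epq ebp ebq] touchE]]] := touching_edge bC.
have sees_p t : t \in touching -> ~~ e b t -> e t p.
  move=> tC nbt; have tM := inM t tC.
  move: tC; rewrite touchE // => /orP[// | etq].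
  have eqb : e q b by rewrite sym.
  have eqp : e q p by rewrite sym.
  by have := paw_nbr pawM qM bM pM tM eqb ebp eqp etq; rewrite sym (negbTE nbt).
have eap : e p a by rewrite sym sees_p // sym.
have ecp : e p c by rewrite sym sees_p.
have := paw_nbr pawM pM aM cM bM eap eac ecp ebp.
by rewrite sym (negbTE nab) (negbTE nbc).
Qed.

End PawFreeComponent.

Lemma paw_free_colour w : 3 <= w ->
  forall M : {set T}, paw_free M -> omega_le M w -> colourable_on M w.
Proof.
move=> w3 M; have [n ltMn] := ubnP #|M|; elim: n M ltMn => // n IH M ltMn pawM omM.
have [tfM | [x [y [z [[xM yM zM] [exy eyz exz]]]]]] := triangle_free_or_triangle M.
  exact: colourable_mon w3 (triangle_free_colour tfM).
pose C := touching M x y z.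
have xC : x \in C by rewrite in_touching xM exy orbT.
rewrite -[w]maxnn; apply: (colourable_split (B := C)).
- move=> u t uC; rewrite in_setD => /andP[tNC tM]; apply: contra tNC.
  exact: (touching_closed pawM xM yM zM exy eyz exz uC tM).
- apply: cotransitive_colour; first exact: touching_cotransitive.
  exact: omega_le_sub (touching_sub M x y z) omM.
- have sRM : M :\: C \subset M by apply: subsetDl.
  apply: IH; [ | exact: paw_free_sub sRM pawM | exact: omega_le_sub sRM omM].
  exact: leq_trans (card_setD_lt xM xC) ltMn.
Qed.

Lemma binomial_colour w :
  forall A : {set T}, omega_le A w -> colourable_on A 'C(w.+1, 2).
Proof.
elim: w => [|[|[|w]] IH] A omA.
- by rewrite (omega_le0 omA); apply: colourable_set0.
- exact: colourable_stable (omega_le1_stable omA).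
- exact: triangle_free_colour (omega_le2_triangle_free omA).
have [-> | [v vA]] := set_0Vmem A; first exact: colourable_set0.
pose N := [set u in A | e v u].
have sNA : N \subset A by apply/subsetP => u; rewrite inE => /andP[].
have colN : colourable_on N 'C(w.+3, 2).
  by apply/IH/(omega_le_nbr omA sNA vA) => u; rewrite inE => /andP[].
have isolated u : u \in A :\: N -> ~~ e v u by rewrite !inE andbC => /andP[->].
have vR : v \in A :\: N by rewrite !inE vA irr.
have colR : colourable_on (A :\: N) w.+3.
  apply: paw_free_colour => //; first exact: isolated_paw_free vR isolated.
  exact: omega_le_sub (subsetDl A N) omA.
by rewrite binS bin1; apply: colourable_union colN colR.
Qed.

Lemma omega_le_clique_number : omega_le [set: T] (clique_number e).
Proof. by move=> B _ cB; apply: (@leq_bigmax_cond _ (fun A => clique e A) (fun A => #|A|)). Qed.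

End ForkCodartFree.

Lemma chromatic_number_le (T : finType) (e : rel T) (irr : irreflexive e) k :
  colourable_on e [set: T] k -> chromatic_number irr <= k.
Proof.
case=> c [ck cp]; rewrite /chromatic_number; case: ex_minnP => m _ min_m; apply: min_m.
apply/existsP; exists [ffun x => Ordinal (ck x (in_setT x))].
apply/forallP => x; apply/forallP => y; apply/implyP => exy; rewrite !ffunE.
by apply: contraNneq (cp x y (in_setT x) (in_setT y) exy) => -[->].
Qed.

Theorem corollary3p10 (T : finType) (e : rel T) (irr : irreflexive e)
  (sym : symmetric e) :
  free_of fork e -> free_of codart e ->
  chromatic_number irr <= 'C(clique_number e + 1, 2).
Proof.
move=> forkF codartF; apply: chromatic_number_le.
rewrite addn1; apply: (binomial_colour irr sym forkF codartF).
exact: omega_le_clique_number.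
Qed.
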